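(* Let $G$ be a strongly contracting group. Then $\mathrm{WP}_G\in\mathrm{DTIME}_*(n)$.
   Context: Automaton groups: an invertible, minimal automaton $A=(S,X,t,o)$ over a finite alphabet $X$ with state set $S$ closed under inversion generates the group $G_A$ of transformations $o(s,\cdot)$ of $X^{*}$; for a word $w\in S^{*}$ and $x\in X$, the section $w|_x\in S^{*}$ is the word of the same length obtained by running the dual automaton: $(s_1\cdots s_n)|_x=s_1'\cdots s_n'$ with $s_i'=t(s_i,x_i)$, $x_1=x$, $x_{i+1}=o(s_i,x_i)$. $l_S$ denotes word length in $G$ w.r.t. $S$. The automaton group is strongly contracting (for that automaton) if $\sum_{x\in X} l_S(w|_x)<|w|$ for all sufficiently long words $w\in S^{*}$; a group is strongly contracting if it is so for some automaton representation. $\mathrm{DTIME}_*(n)$ is the class of languages decided in linear time by a deterministic multi-tape Turing machine. *)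

From mathcomp Require Import all_boot.
From mathcomp Require Import boolp.
Set Implicit Arguments. Unset Strict Implicit. Unset Printing Implicit Defensive.

Section Automaton.
Variables (S X : finType) (t : S -> X -> S) (o : S -> X -> X).

Fixpoint aut_act (s : S) (u : seq X) : seq X :=
  match u with [::] => [::] | x :: u' => o s x :: aut_act (t s x) u' end.

(* action of a word s1...sn : s1 acts first (left-to-right), matching the
   convention used for sections via the dual automaton *)
Definition word_act (w : seq S) (u : seq X) : seq X :=
  foldl (fun v s => aut_act s v) u w.

Definition same_elt (w v : seq S) : Prop := forall u, word_act w u = word_act v u.

Fixpoint section (w : seq S) (x : X) : seq S :=
  match w with [::] => [::] | s :: w' => t s x :: section w' (o s x) end.

Definition invertible_aut : Prop := forall s, injective (o s).
Definition minimal_aut : Prop :=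
  forall s s', (forall u, aut_act s u = aut_act s' u) -> s = s'.
Definition closed_under_inversion : Prop :=
  forall s, exists s', forall u, aut_act s' (aut_act s u) = u /\ aut_act s (aut_act s' u) = u.

Lemma word_len_ex (w : seq S) :
  exists n, `[< exists v : seq S, size v = n /\ same_elt v w >].
Proof. by exists (size w); apply/asboolP; exists w. Qed.
Definition word_len (w : seq S) : nat := ex_minn (word_len_ex w).

Definition strongly_contracting_aut : Prop :=
  exists N, forall w : seq S, N <= size w ->
    \sum_(x : X) word_len (section w x) < size w.

Definition word_problem (w : seq S) : Prop := forall u, word_act w u = u.
End Automaton.

Inductive move := MoveL | MoveR | Stay.

Section TM.
Variable Sigma : finType.

Record TM := {
  tm_k : nat;                 (* tm_k.+1 tapes; tape 0 holds the input *)
  tm_Q : finType;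
  tm_W : finType;
  tm_start : tm_Q;
  tm_accept : tm_Q -> bool;
  (* tape alphabet: option (Sigma + W), None = blank; None = halt *)
  tm_delta : tm_Q -> ('I_tm_k.+1 -> option (Sigma + tm_W)) ->
     option (tm_Q * ('I_tm_k.+1 -> option (Sigma + tm_W)) * ('I_tm_k.+1 -> move))
}.

Variable M : TM.
Definition sym := option (Sigma + tm_W M).
(* tape zipper: reversed left part, scanned cell, right part *)
Definition tape := (seq sym * sym * seq sym)%type.

Definition tape_move (m : move) (tp : tape) : tape :=
  let: (l, a, r) := tp in
  match m with
  | Stay => tp
  | MoveL => match l with [::] => ([::], None, a :: r) | b :: l' => (l', b, a :: r) end
  | MoveR => match r with [::] => (a :: l, None, [::]) | b :: r' => (a :: l, b, r') end
  end.

Definition config := (tm_Q M * ('I_(tm_k M).+1 -> tape))%type.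

Definition tm_step (c : config) : config :=
  let: (q, tps) := c in
  match tm_delta q (fun i => (tps i).1.2) with
  | None => c
  | Some (q', wr, mv) =>
      (q', fun i => let: (l, _, r) := tps i in tape_move (mv i) (l, wr i, r))
  end.

Definition halted (c : config) : bool :=
  if tm_delta c.1 (fun i => (c.2 i).1.2) is None then true else false.

Definition init_config (w : seq Sigma) : config :=
  (tm_start M, fun i =>
     if val i == 0 then
       match [seq Some (inl s) | s <- w] : seq sym with
       | [::] => ([::], None, [::]) | a :: r => ([::], a, r) end
     else ([::], None, [::])).

Definition decides_in_time (L : seq Sigma -> Prop) (f : nat -> nat) : Prop :=
  forall w, exists n, n <= f (size w) /\
    let c := iter n tm_step (init_config w) in
    halted c /\ (tm_accept c.1 <-> L w).
End TM.

Definition DTIME_lin (Sigma : finType) (L : seq Sigma -> Prop) : Prop :=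
  exists (M : TM Sigma) (c : nat), decides_in_time M L (fun n => c * n + c).

(* Cut a word [v] into blocks of [N] letters and replace, for each [x], the section
   of every block by a geodesic.  Strong contraction makes the [#|X|] compressed
   sections of [v] have total length about [(1 - 1/N) |v| + #|X| N], while [v] is
   trivial iff it fixes every letter and all its sections are trivial.  A two-tape
   machine keeps a stack of words whose product is trivial iff the input is: it pops
   a word, decides it by a finite table if it is short, and otherwise checks that it
   fixes each letter while pushing its compressed sections.  With a potential
   proportional to the total stack length, each long word pays for its own round
   and for what it pushes, so the machine runs in linear time. *)
From HB Require Import structures.
From mathcomp Require Import all_boot.
From mathcomp Require Import boolp zify.
Set Implicit Arguments. Unset Strict Implicit. Unset Printing Implicit Defensive.

Section Words.
Variables (S X : finType) (t : S -> X -> S) (o : S -> X -> X).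
Local Notation wact := (word_act t o).
Local Notation sec := (section t o).

Fixpoint letter_act (w : seq S) (x : X) : X :=
  if w is s :: w' then letter_act w' (o s x) else x.

Lemma word_act_nil w : wact w [::] = [::].
Proof. by elim: w => //= s w IH; rewrite /word_act /= -/(wact w [::]). Qed.

Lemma word_act_cons w x u : wact w (x :: u) = letter_act w x :: wact (sec w x) u.
Proof.
elim: w x u => [//|s w IH] x u.
by rewrite /word_act /= -/(wact w _) -/(wact (sec w _) _) IH.
Qed.

Lemma word_act_cat u v z : wact (u ++ v) z = wact v (wact u z).
Proof. by rewrite /word_act foldl_cat. Qed.

Lemma section_cat u v x : sec (u ++ v) x = sec u x ++ sec v (letter_act u x).
Proof. by elim: u x => //= s u IH x; rewrite IH. Qed.

Lemma letter_act_cat u v x : letter_act (u ++ v) x = letter_act v (letter_act u x).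
Proof. by elim: u x => //= s u IH x. Qed.

Lemma size_section w x : size (sec w x) = size w.
Proof. by elim: w x => //= s w IH x; rewrite IH. Qed.

Lemma letter_act_inj w : invertible_aut o -> injective (letter_act w).
Proof. by move=> Hinv; elim: w => //= s w IH x y /IH /Hinv. Qed.

Lemma word_problem_sections w : word_problem t o w <->
  (forall x, letter_act w x = x) /\ forall x, word_problem t o (sec w x).
Proof.
split=> [Hw | [Hfix Hsec] [|x u]]; last by rewrite word_act_cons Hfix Hsec.
- split=> [x | x u]; first by have := Hw [:: x]; rewrite word_act_cons => -[].
  by have := Hw (x :: u); rewrite word_act_cons => -[].
- by rewrite word_act_nil.
Qed.

Lemma same_elt_cat a a' b b' : same_elt t o a a' -> same_elt t o b b' ->
  same_elt t o (a ++ b) (a' ++ b').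
Proof. by move=> Ha Hb u; rewrite !word_act_cat Ha Hb. Qed.

Lemma word_problem_same w v :
  same_elt t o w v -> word_problem t o w <-> word_problem t o v.
Proof. by move=> Hwv; split=> Hw u; [rewrite -Hwv | rewrite Hwv]. Qed.

Lemma geodesic_ex w : exists v, size v = word_len t o w /\ same_elt t o v w.
Proof. by rewrite /word_len; case: ex_minnP => n /asboolP [v [Hv Hs]] _; exists v. Qed.

Definition geodesic w : seq S := projT1 (cid (geodesic_ex w)).

Lemma size_geodesic w : size (geodesic w) = word_len t o w.
Proof. by rewrite /geodesic; case: cid => v []. Qed.

Lemma geodesic_same w : same_elt t o (geodesic w) w.
Proof. by rewrite /geodesic; case: cid => v []. Qed.

End Words.

Section Compression.
Variables (S X : finType) (t : S -> X -> S) (o : S -> X -> X) (N : nat).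
Local Notation sec := (section t o).
Local Notation lact := (letter_act o).
Local Notation geo := (geodesic t o).

(* [b] buffers the current incomplete block; each completed block of [N] letters
   is replaced by a geodesic of its section. *)
Fixpoint compress (y : X) (b v : seq S) : seq S :=
  if v is s :: v' then
    if size (rcons b s) == N then geo (sec (rcons b s) y) ++ compress (lact (rcons b s) y) [::] v'
    else compress y (rcons b s) v'
  else sec b y.

(* Running time of the sweep of the machine below that computes [compress y b v]. *)
Fixpoint compress_time (y : X) (b v : seq S) : nat :=
  if v is s :: v' then
    if size (rcons b s) == N then
      (size (geo (sec (rcons b s) y))).+2 + compress_time (lact (rcons b s) y) [::] v'
    else (compress_time y (rcons b s) v').+1
  else (size (sec b y)).+2.

Lemma compress_same y b v : same_elt t o (compress y b v) (sec (b ++ v) y).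
Proof.
elim: v y b => [|s v IH] y b /=; first by rewrite cats0.
rewrite -cat_rcons; case: ifP => _; last exact: IH.
by rewrite section_cat; apply: same_elt_cat; [exact: geodesic_same | exact: IH].
Qed.

Lemma compress_time_le y b v :
  compress_time y b v <= 2 * size v + size (compress y b v) + 2.
Proof.
elim: v y b => [|s v IH] y b /=; first lia.
case: ifP => _; last by have := IH y (rcons b s); lia.
by rewrite size_cat; have := IH (lact (rcons b s) y) [::]; lia.
Qed.

Lemma word_problem_compress v : word_problem t o v <->
  (forall x, lact v x = x) /\ forall x, word_problem t o (compress x [::] v).
Proof.
rewrite word_problem_sections.
by split=> -[Hfix Hsec]; split=> // x; apply/(word_problem_same (compress_same x [::] v)).
Qed.

Hypothesis Hinv : invertible_aut o.
Hypothesis N_gt0 : 0 < N.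
Hypothesis contracting :
  forall w : seq S, N <= size w -> \sum_(x : X) word_len t o (sec w x) < size w.

Lemma size_geodesic_block b y : size b = N -> size (geo (sec b y)) < N.
Proof.
move=> Hb; rewrite size_geodesic; have := contracting (eq_leq (esym Hb)); rewrite Hb.
by apply: leq_ltn_trans; rewrite (bigD1 y) //=; exact: leq_addr.
Qed.

(* Each completed block contributes at most [N - 1] letters in total over all [x];
   only the final incomplete block can keep its full length. *)
Lemma sum_size_compress v b (f : X -> X) : injective f -> size b < N ->
  \sum_(x : X) size (compress (f x) b v) <=
    (N - 1) * ((size b + size v) %/ N) + #|X| * ((size b + size v) %% N).
Proof.
elim: v b f => [|s v IH] b f Hf Hb /=.
  rewrite addn0 divn_small // modn_small // muln0 add0n.
  under eq_bigr => x _ do rewrite size_section.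
  by rewrite sum_nat_const.
case Hfull: (size (rcons b s) == N); last first.
  have Hb' : size (rcons b s) < N by rewrite ltn_neqAle Hfull size_rcons Hb.
  by have := IH _ f Hf Hb'; rewrite size_rcons addSnnS.
under eq_bigr => x _ do rewrite size_cat size_geodesic.
rewrite big_split /=.
have Hblock : \sum_(x : X) word_len t o (sec (rcons b s) (f x)) <= N - 1.
  have -> : \sum_(x : X) word_len t o (sec (rcons b s) (f x)) =
            \sum_(y : X) word_len t o (sec (rcons b s) y).
    by rewrite [in RHS](reindex_inj Hf).
  have := contracting (eq_leq (esym (eqP Hfull))); rewrite (eqP Hfull).
  move: (\sum_(y : X) _) => A; lia.
have Hf' : injective (fun x => lact (rcons b s) (f x)).
  by move=> x y /(letter_act_inj Hinv) /Hf.
have := IH [::] _ Hf' N_gt0; rewrite /= add0n => Hrest.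
have -> : size b + (size v).+1 = N + size v by rewrite -(eqP Hfull) size_rcons addSnnS.
rewrite divnDl // divnn modnDl N_gt0 mulnDr muln1 -addnA.
exact: leq_add.
Qed.

End Compression.

Inductive state (n : nat) (X B : Type) :=
  | Start | MarkBottom | ScanInput | PopStart
  | Pop of option B
  | Push of 'I_n
  | Sweep of 'I_n & X & B
  | Emit of 'I_n & X & B & bool
  | Rewind of 'I_n
  | Halt of bool.
Arguments Start {n X B}. Arguments MarkBottom {n X B}. Arguments ScanInput {n X B}.
Arguments PopStart {n X B}. Arguments Pop {n X B}. Arguments Push {n X B}.
Arguments Sweep {n X B}. Arguments Emit {n X B}. Arguments Rewind {n X B}.
Arguments Halt {n X B}.

Section StateFinite.
Variables (n : nat) (X B : finType).

Definition state_code :=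
  (('I_4 + option B) + (('I_n + ('I_n * X * B)) + (('I_n * X * B * bool) + 'I_n)) + bool)%type.

Definition encode_state (q : state n X B) : state_code :=
  match q with
  | Start => inl (inl (inl (@Ordinal 4 0 isT)))
  | MarkBottom => inl (inl (inl (@Ordinal 4 1 isT)))
  | ScanInput => inl (inl (inl (@Ordinal 4 2 isT)))
  | PopStart => inl (inl (inl (@Ordinal 4 3 isT)))
  | Pop ob => inl (inl (inr ob))
  | Push j => inl (inr (inl (inl j)))
  | Sweep j x b => inl (inr (inl (inr (j, x, b))))
  | Emit j x b f => inl (inr (inr (inl (j, x, b, f))))
  | Rewind j => inl (inr (inr (inr j)))
  | Halt b => inr b
  end.

Definition decode_state (e : state_code) : state n X B :=
  match e with
  | inl (inl (inl i)) => match val i with 0 => Start | 1 => MarkBottom | 2 => ScanInput | _ => PopStart end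
  | inl (inl (inr ob)) => Pop ob
  | inl (inr (inl (inl j))) => Push j
  | inl (inr (inl (inr (j, x, b)))) => Sweep j x b
  | inl (inr (inr (inl (j, x, b, f)))) => Emit j x b f
  | inl (inr (inr (inr j))) => Rewind j
  | inr b => Halt b
  end.

Lemma encode_stateK : cancel encode_state decode_state. Proof. by case. Qed.

HB.instance Definition _ := Finite.copy (state n X B) (can_type encode_stateK).

End StateFinite.

Fixpoint words_upto (S : Type) (n : nat) (A : seq S) : seq (seq S) :=
  if n is n'.+1 then [::] :: [seq s :: w | s <- A, w <- words_upto n' A] else [:: [::]].

Lemma mem_words_upto (S : finType) n (w : seq S) : (w \in words_upto n (enum S)) = (size w <= n).
Proof.
elim: n w => [|n IH] [|s w] //=.
rewrite in_cons /= ltnS -IH; apply/allpairsP/idP => [[[a b] [_ Hb /= E]]|Hw].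
  by case: E => _ ->.
by exists (s, w); rewrite mem_enum.
Qed.

Lemma long_round_arith N a q r O : 0 < N -> r < N -> O <= (N - 1) * q + a * r ->
  7 * a + 2 + ((3 * a + 1) + ((3 * a + 1) * N + N + 1) * a) * N <= q ->
  (q * N + r) + 2 + a * (3 * (q * N + r) + 5) + ((3 * a + 1) * N + N + 1) * O + a * 2
    <= ((3 * a + 1) * N + N) * (q * N + r) + 2.
Proof.
case: N => // N _; rewrite subSS subn0 => Hr HO Hq.
move: Hq; set C := (3 * a + 1) * N.+1 + N.+1 => Hq.
have E1 : (C + 1) * O <= (C + 1) * (N * q) + (C + 1) * (a * r).
  by rewrite -mulnDr leq_mul2l HO orbT.
have E2 : C * (q * N.+1) = (C + 1) * (N * q) + q * ((3 * a + 1) * N.+1 + 1).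
  by rewrite /C; lia.
have E3 : (3 * a + 1) * r + (C + 1) * (a * r) <= ((3 * a + 1) + (C + 1) * a) * N.+1.
  by rewrite mulnA -mulnDl leq_mul2l ltnW ?orbT.
by move: E1 E2 E3 Hq; move: C => C; lia.
Qed.

#[local] Arguments tape_move {Sigma M} m tp : simpl never.

Section Machine.
Variables (S X : finType) (t : S -> X -> S) (o : S -> X -> X) (N : nat).
Local Notation sec := (section t o).
Local Notation lact := (letter_act o).
Local Notation geo := (geodesic t o).
Local Notation compress := (compress t o N).
Local Notation compress_time := (compress_time t o N).

Definition letter_price := (3 * #|X| + 1) * N + N.
(* Words longer than [capacity] have enough complete blocks for [long_round_arith]. *)
Definition capacity :=
  (7 * #|X| + 2 + ((3 * #|X| + 1) + (letter_price + 1) * #|X|) * N) * N.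

Definition buffer := seq_sub (words_upto capacity (enum S)).

Lemma nil_words_upto : [::] \in words_upto capacity (enum S).
Proof. by rewrite mem_words_upto. Qed.

Definition buf0 : buffer := SeqSub nil_words_upto.
Definition mkbuf (w : seq S) : buffer := insubd buf0 w.
Arguments mkbuf : simpl never.

Lemma mkbufK w : size w <= capacity -> val (mkbuf w) = w.
Proof. by move=> Hw; rewrite /mkbuf insubdK // -topredE /= mem_words_upto. Qed.

Lemma mkbuf0 : mkbuf [::] = buf0.
Proof. by apply: val_inj; rewrite mkbufK. Qed.

Lemma size_buffer (b : buffer) : size (val b) <= capacity.
Proof. by move: (ssvalP b); rewrite mem_words_upto. Qed.

Definition ctrl := state #|X| X buffer.
Definition cell := option (S + bool).
Definition sep : cell := Some (inr true).
Definition lmark : cell := Some (inr false).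
Definition letter (s : S) : cell := Some (inl s).
Definition xth (j : 'I_#|X|) : X := enum_val j.

(* There are finitely many words that fit in the buffer, so the finite control can
   decide them by a hard-wired table. *)
Definition table (v : seq S) : bool := `[< word_problem t o v >].

Definition buffer_push (ob : option buffer) (s : S) : option buffer :=
  obind (fun b : buffer => insub (s :: val b)) ob.

Definition after_pop (ob : option buffer) : ctrl :=
  match ob with
  | Some b => if table (val b) then PopStart else Halt false
  | None => if insub 0 is Some j then Push j else PopStart
  end.

Definition after_rewind (j : 'I_#|X|) : ctrl :=
  if insub j.+1 is Some j' then Push j' else PopStart.

(* [Start], [MarkBottom] and [ScanInput] turn the input [w] into the stack [# w].
   Tape 0 holds, left of its head, a stack [# v1 # v2 ... # vk] of words whose
   product is trivial iff the input is.  [Pop] erases the top word [vk] while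
   copying it onto tape 1 (after the marker [lmark]) and into the buffer, which
   overflows to [None] for long words.  A long word is then swept once per letter
   [xth j]: [Sweep] reads it blockwise, [Emit] pushes the compressed section at
   [xth j] onto the stack, and [Rewind] returns to the marker; the sweep rejects
   unless [vk] fixes [xth j]. *)
Definition delta (q : ctrl) (c0 c1 : cell) : option (ctrl * cell * cell * move * move) :=
  match q with
  | Start => Some (MarkBottom, c0, c1, MoveL, Stay)
  | MarkBottom => Some (ScanInput, sep, c1, MoveR, Stay)
  | ScanInput => if c0 is Some (inl _) then Some (ScanInput, c0, c1, MoveR, Stay)
                 else Some (PopStart, c0, c1, Stay, Stay)
  | PopStart => Some (Pop (Some buf0), c0, None, MoveL, MoveL)
  | Pop ob => match c0 with
      | Some (inl s) => Some (Pop (buffer_push ob s), None, c0, MoveL, MoveL)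
      | Some (inr _) => Some (after_pop ob, None, lmark, Stay, Stay)
      | None => Some (Halt true, c0, c1, Stay, Stay) end
  | Push j => Some (Sweep j (xth j) buf0, sep, c1, MoveR, MoveR)
  | Sweep j y b => match c1 with
      | Some (inl s) =>
          if size (rcons (val b) s) == N then
            Some (Emit j (lact (rcons (val b) s) y) (mkbuf (geo (sec (rcons (val b) s) y))) false,
                  c0, c1, Stay, MoveR)
          else Some (Sweep j y (mkbuf (rcons (val b) s)), c0, c1, Stay, MoveR)
      | _ => Some (Emit j (lact (val b) y) (mkbuf (sec (val b) y)) true, c0, c1, Stay, Stay) end
  | Emit j y p last => match val p with
      | a :: p' => Some (Emit j y (mkbuf p') last, letter a, c1, MoveR, Stay)
      | [::] => if ~~ last then Some (Sweep j y buf0, c0, c1, Stay, Stay)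
                else if y == xth j then Some (Rewind j, c0, c1, Stay, Stay)
                else Some (Halt false, c0, c1, Stay, Stay) end
  | Rewind j => if c1 is Some (inr false) then Some (after_rewind j, c0, c1, Stay, Stay)
                else Some (Rewind j, c0, c1, Stay, MoveL)
  | Halt _ => None
  end.

Definition tapes2 (T : Type) (a b : T) : 'I_2 -> T := fun i => if val i == 0 then a else b.

Definition accepting (q : ctrl) : bool := if q is Halt b then b else false.

Definition machine : TM S := {|
  tm_k := 1; tm_Q := ctrl; tm_W := bool; tm_start := Start; tm_accept := accepting;
  tm_delta := fun q hs => match delta q (hs ord0) (hs ord_max) with
    | None => None
    | Some (q', w0, w1, m0, m1) => Some (q', tapes2 w0 w1, tapes2 m0 m1) end |}.

Definition zipper := (seq cell * cell * seq cell)%type.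
Definition cfg (q : ctrl) (T0 T1 : zipper) : config machine := (q, tapes2 T0 T1).
Definition mstep : config machine -> config machine := @tm_step S machine.
Arguments cfg : simpl never.
Arguments mstep : simpl never.
#[local] Arguments iter : simpl never.

Lemma mstepE q (T0 T1 : zipper) : mstep (cfg q T0 T1) =
  match delta q T0.1.2 T1.1.2 with
  | None => cfg q T0 T1
  | Some (q', w0, w1, m0, m1) =>
      cfg q' (@tape_move S machine m0 (T0.1.1, w0, T0.2))
             (@tape_move S machine m1 (T1.1.1, w1, T1.2)) end.
Proof.
case: T0 => [[l0 a0] r0]; case: T1 => [[l1 a1] r1].
rewrite /mstep /tm_step /cfg /=.
case: (delta q a0 a1) => [[[[[q' w0] w1] m0] m1]|] //=.
by congr pair; apply: funext => i; rewrite /tapes2; case: (val i == 0).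
Qed.

Lemma halt_fix n b T0 T1 : iter n mstep (cfg (Halt b) T0 T1) = cfg (Halt b) T0 T1.
Proof. by elim: n => // n IH; rewrite iterS IH mstepE. Qed.

Lemma accepting_halt b T0 T1 : accepting (cfg (Halt b) T0 T1).1 = b.
Proof. by rewrite /cfg. Qed.

(* The head reads the first cell of [xs] (a blank if [xs] is empty), and [xs]
   extends rightwards in [ztape_r], leftwards in [ztape_l]. *)
Definition ztape_r (l xs : seq cell) : zipper := (l, head None xs, behead xs).
Definition ztape_l (xs r : seq cell) : zipper := (behead xs, head None xs, r).
Local Notation tmv := (@tape_move S machine).

Lemma tape_moveR l a r : tmv MoveR (l, a, r) = ztape_r (a :: l) r.
Proof. by case: r. Qed.
Lemma tape_moveL l a r : tmv MoveL (l, a, r) = ztape_l l (a :: r).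
Proof. by case: l. Qed.
Lemma tape_stay l a r : tmv Stay (l, a, r) = (l, a, r).
Proof. by []. Qed.
Lemma tape_stay_eta (T : zipper) : tmv Stay (T.1.1, T.1.2, T.2) = T.
Proof. by case: T => [[]]. Qed.

Lemma ztape_r_blanks l m : ztape_r l (nseq m None) = (l, None, nseq m.-1 None).
Proof. by case: m. Qed.
Lemma nseq_blank_catS m (R : seq cell) : nseq m None ++ None :: R = nseq m.+1 None ++ R.
Proof. by elim: m => //= m ->. Qed.
Lemma nseq_blank_cat m k : nseq m (None : cell) ++ nseq k None = nseq (m + k) None.
Proof. by elim: m => //= m ->. Qed.

Definition stack_enc (st : seq (seq S)) : seq cell := flatten [seq sep :: map letter v | v <- st].

Lemma rev_stack_enc_cat st st' :
  rev (stack_enc (st ++ st')) = rev (stack_enc st') ++ rev (stack_enc st).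
Proof. by rewrite /stack_enc map_cat flatten_cat rev_cat. Qed.
Lemma rev_stack_enc1 v : rev (stack_enc [:: v]) = map letter (rev v) ++ [:: sep].
Proof. by rewrite /stack_enc /= cats0 rev_cons map_rev -cats1. Qed.
Lemma rev_stack_enc_cons v st :
  rev (stack_enc (v :: st)) = rev (stack_enc st) ++ map letter (rev v) ++ [:: sep].
Proof. by rewrite -cat1s rev_stack_enc_cat rev_stack_enc1. Qed.
Lemma rev_stack_enc_rcons st v :
  rev (stack_enc (rcons st v)) = map letter (rev v) ++ sep :: rev (stack_enc st).
Proof. by rewrite -cats1 rev_stack_enc_cat rev_stack_enc1 -catA. Qed.

Definition stack_cfg (st : seq (seq S)) (m : nat) (T1 : zipper) : config machine :=
  cfg PopStart (rev (stack_enc st), None, nseq m None) T1.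

Lemma scan_input u l rest (T1 : zipper) :
  iter (size u) mstep (cfg ScanInput (ztape_r l (map letter u ++ rest)) T1) =
  cfg ScanInput (ztape_r (rev (map letter u) ++ l) rest) T1.
Proof.
elim: u l => [//|s u IH] l.
by rewrite iterSr mstepE /= tape_moveR tape_stay_eta IH rev_cons cat_rcons.
Qed.

Lemma init_run w :
  iter (size w).+3 mstep (init_config machine w) = stack_cfg [:: w] 0 ([::], None, [::]).
Proof.
have -> : init_config machine w = cfg Start (ztape_r [::] (map letter w)) ([::], None, [::]).
  rewrite /init_config /cfg; congr pair; apply: funext => i; rewrite /tapes2.
  by case: (val i == 0) => //; case: w.
rewrite iterS !iterSr mstepE /= tape_moveL tape_stay mstepE /= tape_moveR tape_stay.
have -> : ztape_r [:: sep] (head None (map letter w) :: behead (map letter w)) =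
          ztape_r [:: sep] (map letter w ++ [::]) by rewrite cats0.
by rewrite scan_input mstepE /= tape_stay /stack_cfg rev_stack_enc1 map_rev.
Qed.

Definition pop_buffer (ob : option buffer) (u : seq S) : option buffer := foldl buffer_push ob u.

Lemma pop_buffer_none u : pop_buffer None u = None.
Proof. by elim: u. Qed.

Lemma pop_buffer_some u (b : buffer) : omap val (pop_buffer (Some b) u) =
  if size u + size (val b) <= capacity then Some (rev u ++ val b) else None.
Proof.
elim: u b => [|s u IH] b /=; first by rewrite size_buffer.
rewrite /buffer_push /=; case: insubP => [b' _ Hval|Hout].
  by rewrite IH Hval /= addSnnS rev_cons cat_rcons.
rewrite pop_buffer_none; case: ifP => // Hfit; exfalso; move/negP: Hout; apply.
by rewrite mem_words_upto /=; lia.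
Qed.

Lemma pop_letters u ob E R ls rs :
  iter (size u) mstep (cfg (Pop ob) (ztape_l (map letter u ++ E) R) (ztape_l ls rs)) =
  cfg (Pop (pop_buffer ob u)) (ztape_l E (nseq (size u) None ++ R))
      (ztape_l (drop (size u) ls) (rev (map letter u) ++ rs)).
Proof.
elim: u ob R ls rs => [|s u IH] ob R ls rs; first by rewrite drop0.
rewrite iterSr mstepE /= !tape_moveL IH nseq_blank_catS rev_cons cat_rcons.
by case: ls.
Qed.

Definition copy_tape (v : seq S) (T1 : zipper) : zipper :=
  (behead (drop (size v) T1.1.1), lmark, map letter v ++ None :: T1.2).

Lemma pop_word st v m T1 :
  iter (size v).+2 mstep (stack_cfg (rcons st v) m T1) =
  cfg (after_pop (pop_buffer (Some buf0) (rev v)))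
      (rev (stack_enc st), None, nseq (size v + m).+1 None) (copy_tape v T1).
Proof.
rewrite /stack_cfg rev_stack_enc_rcons iterS iterSr mstepE /= !tape_moveL.
have := pop_letters (rev v) (Some buf0) (sep :: rev (stack_enc st)) (None :: nseq m None)
  T1.1.1 (None :: T1.2).
rewrite size_rev => ->.
by rewrite mstepE /= !tape_stay map_rev revK nseq_blank_catS nseq_blank_cat addSn.
Qed.

Lemma pop_empty m T1 : iter 2 mstep (stack_cfg [::] m T1) =
  cfg (Halt true) ([::], None, None :: nseq m None) (ztape_l T1.1.1 (None :: T1.2)).
Proof. by rewrite !iterSr mstepE /= !tape_moveL mstepE /= !tape_stay. Qed.

Lemma pop_buffer_short v : size v <= capacity ->
  omap val (pop_buffer (Some buf0) (rev v)) = Some v.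
Proof. by move=> Hv; rewrite pop_buffer_some /= size_rev addn0 Hv cats0 revK. Qed.

Lemma pop_buffer_long v : capacity < size v -> pop_buffer (Some buf0) (rev v) = None.
Proof.
move=> Hv; have := pop_buffer_some (rev v) buf0.
by rewrite /= size_rev addn0 leqNgt Hv; case: pop_buffer.
Qed.

Lemma emit p j y last L m (T1 : zipper) : size p <= capacity ->
  iter (size p) mstep (cfg (Emit j y (mkbuf p) last) (L, None, nseq m None) T1) =
  cfg (Emit j y buf0 last) (rev (map letter p) ++ L, None, nseq (m - size p) None) T1.
Proof.
elim: p L m => [|a p IH] L m Hp; first by rewrite mkbuf0 subn0.
rewrite iterSr mstepE /= mkbufK //= tape_moveR ztape_r_blanks tape_stay_eta IH; last exact: ltnW.
by rewrite rev_cons cat_rcons; congr cfg; congr (_, _, _); congr nseq; lia.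
Qed.

Lemma rewind u E R j (T0 : zipper) :
  iter (size u) mstep (cfg (Rewind j) T0 (ztape_l (map letter u ++ E) R)) =
  cfg (Rewind j) T0 (ztape_l E (rev (map letter u) ++ R)).
Proof.
elim: u R => [//|s u IH] R.
by rewrite iterSr mstepE /= tape_stay_eta tape_moveL IH rev_cons cat_rcons.
Qed.

Hypothesis Hinv : invertible_aut o.
Hypothesis N_gt0 : 0 < N.
Hypothesis contracting :
  forall w : seq S, N <= size w -> \sum_(x : X) word_len t o (sec w x) < size w.

Lemma N_le_capacity : N <= capacity.
Proof. by rewrite /capacity; apply: leq_pmull; lia. Qed.

Lemma geodesic_block_fits b y : size b = N -> size (geo (sec b y)) <= capacity.
Proof.
move=> Hb; apply: leq_trans N_le_capacity; apply: ltnW.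
exact: size_geodesic_block.
Qed.

Lemma sweep v j y (b : buffer) L m lsc rs0 : size (val b) < N ->
  iter (compress_time y (val b) v) mstep
       (cfg (Sweep j y b) (L, None, nseq m None) (ztape_r lsc (map letter v ++ None :: rs0))) =
  cfg (if lact (val b ++ v) y == xth j then Rewind j else Halt false)
      (rev (map letter (compress y (val b) v)) ++ L, None,
       nseq (m - size (compress y (val b) v)) None)
      (rev (map letter v) ++ lsc, None, rs0).
Proof.
elim: v y b L m lsc => [|s v IH] y b L m lsc Hb /=.
  rewrite iterS iterSr mstepE /= !tape_stay emit; last first.
    by rewrite size_section; apply: leq_trans N_le_capacity; exact: ltnW.
  by rewrite mstepE /= cats0; case: (_ == _); rewrite /= !tape_stay.
case Hfull: (size (rcons (val b) s) == N).
  rewrite addnC iterD iterS iterSr mstepE /= Hfull tape_stay tape_moveR.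
  rewrite emit; last exact: geodesic_block_fits (eqP Hfull).
  rewrite mstepE /= !tape_stay.
  have -> := IH (lact (rcons (val b) s) y) buf0
    (rev (map letter (geo (sec (rcons (val b) s) y))) ++ L)
    (m - size (geo (sec (rcons (val b) s) y))) (letter s :: lsc) N_gt0.
  by rewrite /= -letter_act_cat map_cat rev_cat -catA size_cat subnDA rev_cons !cat_rcons.
have Hfits : size (rcons (val b) s) <= capacity.
  by rewrite size_rcons; apply: leq_trans N_le_capacity.
have Hb' : size (val (mkbuf (rcons (val b) s))) < N.
  by rewrite mkbufK // ltn_neqAle Hfull size_rcons.
have := IH y (mkbuf (rcons (val b) s)) L m (letter s :: lsc) Hb'.
rewrite mkbufK // => IH'.
by rewrite iterSr mstepE /= Hfull tape_stay tape_moveR IH' rev_cons !cat_rcons.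
Qed.

Lemma push_section j v L m lj rs0 :
  iter (compress_time (xth j) [::] v + (size v).+3) mstep
       (cfg (Push j) (L, None, nseq m None) (lj, lmark, map letter v ++ None :: rs0)) =
  let out := rev (map letter (compress (xth j) [::] v)) ++ sep :: L in
  let m' := m.-1 - size (compress (xth j) [::] v) in
  if lact v (xth j) == xth j then
    cfg (after_rewind j) (out, None, nseq m' None) (lj, lmark, map letter v ++ None :: rs0)
  else cfg (Halt false) (out, None, nseq m' None) (rev (map letter v) ++ lmark :: lj, None, rs0).
Proof.
have -> : compress_time (xth j) [::] v + (size v).+3 =
          (size v).+2 + (compress_time (xth j) [::] v).+1 by lia.
rewrite iterD (iterSr (compress_time (xth j) [::] v)) mstepE /= !tape_moveR ztape_r_blanks.
have := @sweep v j (xth j) buf0 (sep :: L) m.-1 (lmark :: lj) rs0 N_gt0.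
move=> /= ->.
case: ifP => _; last by rewrite halt_fix.
rewrite iterS iterSr mstepE /= tape_stay tape_moveL -(map_rev letter v).
have := rewind (rev v) (lmark :: lj) (None :: rs0) j
  (rev (map letter (compress (xth j) [::] v)) ++ sep :: L, None,
   nseq (m.-1 - size (compress (xth j) [::] v)) None).
rewrite size_rev => ->.
by rewrite mstepE /= tape_stay map_rev revK.
Qed.

Lemma drop_enum_xth (j : 'I_#|X|) : drop j (enum X) = xth j :: drop j.+1 (enum X).
Proof. by rewrite /xth (enum_val_nth (enum_val j)) -drop_nth // -cardT. Qed.

Lemma after_rewind_last (j : 'I_#|X|) : #|X| = j.+1 -> after_rewind j = PopStart.
Proof. by move=> HX; rewrite /after_rewind insubF //; apply/negbTE; rewrite -leqNgt; lia. Qed.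

Lemma after_rewind_next (j : 'I_#|X|) : j.+1 < #|X| ->
  exists j' : 'I_#|X|, val j' = j.+1 /\ after_rewind j = Push j'.
Proof.
by move=> HX; exists (Ordinal HX); rewrite /after_rewind (insubT (fun n => n < #|X|) HX).
Qed.

Lemma push_sections v lj rs0 k : forall (j : 'I_#|X|) L m, #|X| = j + k.+1 ->
  let xs := drop j (enum X) in
  let c := cfg (Push j) (L, None, nseq m None) (lj, lmark, map letter v ++ None :: rs0) in
  let n := \sum_(x <- xs) (compress_time x [::] v + (size v).+3) in
  if all (fun x => lact v x == x) xs then
    exists m', iter n mstep c =
      cfg PopStart (rev (stack_enc [seq compress x [::] v | x <- xs]) ++ L, None, nseq m' None)
          (lj, lmark, map letter v ++ None :: rs0)
  else exists n' T0 T1, n' <= n /\ iter n' mstep c = cfg (Halt false) T0 T1.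
Proof.
elim: k => [|k IH] j L m HX /=; rewrite drop_enum_xth big_cons /=.
  have -> : drop j.+1 (enum X) = [::] by apply: drop_oversize; rewrite -cardT; lia.
  rewrite big_nil addn0 andbT push_section /=.
  case Hfix: (lact v (xth j) == xth j).
    rewrite after_rewind_last; last lia.
    by eexists; rewrite rev_stack_enc1 map_rev -catA.
  by do 3 eexists; split; [exact: leqnn | rewrite push_section /= Hfix].
have [j' [Hj' Hnext]] : exists j' : 'I_#|X|, val j' = j.+1 /\ after_rewind j = Push j'.
  by apply: after_rewind_next; lia.
have HX' : #|X| = j' + k.+1 by rewrite Hj'; lia.
have := IH j' (rev (map letter (compress (xth j) [::] v)) ++ sep :: L)
  (m.-1 - size (compress (xth j) [::] v)) HX'.
rewrite /= Hj' addnC iterD push_section /= => IHj.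
case Hfix: (lact v (xth j) == xth j) => /=; last first.
  exists (compress_time (xth j) [::] v + (size v).+3); do 2 eexists.
  by split; [exact: leq_addl | rewrite push_section /= Hfix].
move: IHj; case: ifP => _ => [[m' Hm'] | [n' [T0 [T1 [Hn' Hhalt]]]]].
  exists m'; rewrite Hnext Hm'; congr cfg; congr (_, _, _).
  by rewrite rev_stack_enc_cons map_rev -!catA.
exists (n' + (compress_time (xth j) [::] v + (size v).+3)), T0, T1.
by split; [rewrite leq_add2r | rewrite iterD push_section /= Hfix Hnext].
Qed.

(* The [+ 2] pays for the separator of the word when it is popped. *)
Definition potential (st : seq (seq S)) : nat := \sum_(v <- st) (letter_price * size v + 2).

Definition stack_trivial (st : seq (seq S)) : Prop := forall v, v \in st -> word_problem t o v.

Lemma potential_rcons st v : potential (rcons st v) = potential st + (letter_price * size v + 2).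
Proof. by rewrite /potential -cats1 big_cat big_seq1. Qed.

Lemma potential_cat st st' : potential (st ++ st') = potential st + potential st'.
Proof. by rewrite /potential big_cat. Qed.

Lemma letter_price_ge n : n <= letter_price * n.
Proof. by apply: leq_pmull; rewrite /letter_price addn_gt0 N_gt0 orbT. Qed.

Lemma stack_trivial_cat a b : stack_trivial (a ++ b) <-> stack_trivial a /\ stack_trivial b.
Proof.
split=> [Hab | [Ha Hb] w]; last by rewrite mem_cat => /orP [/Ha | /Hb].
by split=> w Hw; apply: Hab; rewrite mem_cat Hw ?orbT.
Qed.

Lemma stack_trivial_rcons a v : stack_trivial (rcons a v) <-> stack_trivial a /\ word_problem t o v.
Proof.
rewrite -cats1 stack_trivial_cat; split=> -[Ha Hv]; split=> //.
  by apply: Hv; rewrite mem_head.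
by move=> w; rewrite inE => /eqP ->.
Qed.

Lemma stack_trivial_map (f : X -> seq S) :
  stack_trivial [seq f x | x <- enum X] <-> forall x, word_problem t o (f x).
Proof.
split=> [Hf x | Hf w /mapP [x _ ->] //].
by apply: Hf; apply: map_f; rewrite mem_enum.
Qed.

Lemma word_problem_void : #|X| = 0 -> forall v, word_problem t o v.
Proof.
move=> HX v [|x u]; first by rewrite word_act_nil.
suff: 0 < #|X| by rewrite HX.
by apply/card_gt0P; exists x.
Qed.

(* The whole round for a long word, including the potential of what it pushes,
   is paid for by that word's own potential. *)
Lemma long_round_cost v : capacity < size v ->
  (size v).+2 + \sum_(x <- enum X) (compress_time x [::] v + (size v).+3)
   + potential [seq compress x [::] v | x <- enum X] <= letter_price * size v + 2.
Proof.
move=> Hv; rewrite /potential big_map !big_enum /=.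
have Htime : \sum_(x in X) (compress_time x [::] v + (size v).+3) <=
             #|X| * (3 * size v + 5) + \sum_(x in X) size (compress x [::] v).
  rewrite -sum_nat_const -big_split /=; apply: leq_sum => x _.
  by have := compress_time_le t o N x [::] v; lia.
have Hpot : \sum_(x in X) (letter_price * size (compress x [::] v) + 2) =
            letter_price * \sum_(x in X) size (compress x [::] v) + #|X| * 2.
  by rewrite big_split sum_nat_const big_distrr.
have Hsize : \sum_(x in X) size (compress x [::] v) <=
             (N - 1) * (size v %/ N) + #|X| * (size v %% N).
  exact: (sum_size_compress Hinv N_gt0 contracting v (b := [::]) (@inj_id X) N_gt0).
have Hq : 7 * #|X| + 2 + ((3 * #|X| + 1) + (letter_price + 1) * #|X|) * N <= size v %/ N.
  by rewrite leq_divRL //; apply: ltnW.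
have := long_round_arith N_gt0 (ltn_pmod (size v) N_gt0) Hsize Hq.
rewrite -(divn_eq (size v) N) -/letter_price Hpot => Harith.
move: Htime Harith; set T := \sum_(i in X) (compress_time _ _ _ + _).
by set O := \sum_(i in X) size _; lia.
Qed.

Definition round_ok (st : seq (seq S)) (n : nat) (c : config machine) : Prop :=
  [/\ halted c, accepting c.1 <-> stack_trivial st & n <= potential st] \/
  exists st' m T1, [/\ c = stack_cfg st' m T1, stack_trivial st' <-> stack_trivial st,
                      0 < n & n + potential st' <= potential st].

Lemma round_drop st v m T1 :
  after_pop (pop_buffer (Some buf0) (rev v)) = PopStart -> word_problem t o v ->
  round_ok (rcons st v) (size v).+2 (iter (size v).+2 mstep (stack_cfg (rcons st v) m T1)).
Proof.
move=> Hpop Hv; rewrite pop_word Hpop; right.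
exists st, (size v + m).+1, (copy_tape v T1); split=> //.
  by rewrite stack_trivial_rcons; tauto.
by rewrite potential_rcons; have := letter_price_ge (size v); lia.
Qed.

Lemma round_reject st v m T1 n T0 T1' :
  iter n mstep (stack_cfg (rcons st v) m T1) = cfg (Halt false) T0 T1' ->
  ~ word_problem t o v -> n <= potential (rcons st v) ->
  round_ok (rcons st v) n (iter n mstep (stack_cfg (rcons st v) m T1)).
Proof.
move=> -> Hv Hn; left; split=> //.
by rewrite accepting_halt; split=> // /stack_trivial_rcons [].
Qed.

Lemma round_short st v m T1 : size v <= capacity ->
  exists n, round_ok (rcons st v) n (iter n mstep (stack_cfg (rcons st v) m T1)).
Proof.
move=> Hv; have := pop_buffer_short Hv.
case Hb: pop_buffer => [b|] //= [Hbv]; exists (size v).+2.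
case Htab: (table v).
  by apply: round_drop; [rewrite Hb /after_pop /= Hbv Htab | exact/asboolP].
apply: round_reject; first by rewrite pop_word Hb /after_pop /= Hbv Htab.
  by move=> /asboolP; rewrite /table in Htab; rewrite Htab.
by rewrite potential_rcons; have := letter_price_ge (size v); lia.
Qed.

Lemma round_long st v m T1 : capacity < size v -> 0 < #|X| ->
  exists n, round_ok (rcons st v) n (iter n mstep (stack_cfg (rcons st v) m T1)).
Proof.
move=> Hv HX; pose j0 : 'I_#|X| := Ordinal HX.
have Hpop : after_pop (pop_buffer (Some buf0) (rev v)) = Push j0.
  by rewrite pop_buffer_long // /after_pop (insubT (fun n => n < #|X|) HX).
have HX0 : #|X| = j0 + (#|X|.-1).+1 by rewrite /= add0n prednK.
have := push_sections v (behead (drop (size v) T1.1.1)) T1.2 (rev (stack_enc st))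
  (size v + m).+1 HX0.
rewrite /= drop0; set sweeps := \sum_(x <- enum X) _.
have Hcost := long_round_cost Hv.
case Hall: (all _ _) => /=; last first.
  move=> [n' [T0 [T1' [Hn' Hhalt]]]]; exists (n' + (size v).+2).
  apply: (round_reject (T0 := T0) (T1' := T1')).
  - by rewrite iterD pop_word Hpop /copy_tape Hhalt.
  - move=> /(word_problem_compress t o N) [Hfix _]; move: Hall.
    by rewrite (_ : all _ _ = true) //; apply/allP => x _; apply/eqP.
  - by rewrite potential_rcons; lia.
move=> [m' Hm']; exists (sweeps + (size v).+2); right.
  exists (st ++ [seq compress x [::] v | x <- enum X]), m', (copy_tape v T1); split.
  - by rewrite iterD pop_word Hpop /copy_tape Hm' /stack_cfg rev_stack_enc_cat.
- rewrite stack_trivial_cat stack_trivial_rcons stack_trivial_map (word_problem_compress t o N).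
  suff: forall x, lact v x = x by tauto.
  by move=> x; apply/eqP; move/allP: Hall; apply; rewrite mem_enum.
- by rewrite addnS.
- by rewrite potential_cat potential_rcons; lia.
Qed.

Lemma round st v m T1 :
  exists n, round_ok (rcons st v) n (iter n mstep (stack_cfg (rcons st v) m T1)).
Proof.
have [Hshort | Hlong] := leqP (size v) capacity; first exact: round_short.
have [HX0 | HX] := posnP #|X|; last exact: round_long.
exists (size v).+2; apply: round_drop; last exact: word_problem_void.
by rewrite pop_buffer_long // /after_pop insubF // HX0.
Qed.

Lemma run st m T1 : exists n, let c := iter n mstep (stack_cfg st m T1) in
  [/\ n <= potential st + 2, halted c & accepting c.1 <-> stack_trivial st].
Proof.
have [P] := ubnP (potential st); elim: P st m T1 => // P IH st m T1 Hpot.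
case/lastP: st Hpot => [|st v] Hpot.
  by exists 2; rewrite pop_empty; split=> //; lia.
have [n [[Hhalt Hacc Hn] | [st' [m' [T1' [Hc Hst' Hn0 Hn]]]]]] := round st v m T1.
  by exists n; split=> //; lia.
have [|n' [Hn' Hhalt Hacc]] := IH st' m' T1'; first lia.
by exists (n' + n); rewrite iterD Hc; split=> //; [lia | rewrite Hacc].
Qed.

End Machine.

Theorem mainTheorem8 (S X : finType) (t : S -> X -> S) (o : S -> X -> X) :
  invertible_aut o -> minimal_aut t o -> closed_under_inversion t o ->
  strongly_contracting_aut t o ->
  DTIME_lin (word_problem t o).
Proof.
move=> Hinv _ _ [N0 HN0].
have contracting : forall w : seq S, N0.+1 <= size w ->
    \sum_(x : X) word_len t o (section t o w x) < size w.
  by move=> w Hw; apply: HN0; exact: ltnW.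
exists (machine t o N0.+1), (letter_price X N0.+1 + 7) => w.
have [n [Hn Hhalt Hacc]] := run Hinv (ltn0Sn N0) contracting [:: w] 0 ([::], None, [::]).
exists (n + (size w).+3); split.
  move: Hn; rewrite /potential big_seq1.
  by have := letter_price_ge X (ltn0Sn N0) (size w); lia.
rewrite iterD -/(@mstep S X t o N0.+1) init_run; split=> //; rewrite Hacc.
by split=> [Hst | Hw v]; [apply: Hst; rewrite mem_head | rewrite inE => /eqP ->].
Qed.
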